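(* Let $\boldsymbol\mu=(\mu^{(1)},\ldots,\mu^{(n)})$ be an $I$-tuple of partitions, not all zero, where $\mu^{(i)}$ has $m_a^{(i)}$ rows of length $a$. Put $R(\mu^{(i)})=\{(a,u)\mid a>0,\ 1\le u\le m_a^{(i)}\}$, totally ordered lexicographically, and $$P(\boldsymbol\mu)=2\sum_{i\in I}\sum_{\substack{(a,u),(b,v)\in R(\mu^{(i)})\\(a,u)<(b,v)}}\min\{a,b\}-\sum_{i<j}\sum_{\substack{(a,u)\in R(\mu^{(i)})\\(b,v)\in R(\mu^{(j)})}}\min\{|c_{ji}|a,|c_{ij}|b\}.$$ Then $P(\boldsymbol\mu)>-\sum_{i\in I}|\mu^{(i)}|$.
   Context: $(c_{ij})_{i,j\in I}$, $I=\{1,\dots,n\}$, is the Cartan matrix of a complex simple Lie algebra (finite type), with $I$ ordered naturally; $|\mu|$ is the size of a partition $\mu$. *)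

From HB Require Import structures.
From mathcomp Require Import all_boot all_order all_algebra.
Set Implicit Arguments. Unset Strict Implicit. Unset Printing Implicit Defensive.
Import Order.TTheory GRing.Theory Num.Theory.

(* Generalized Cartan matrix on I = 'I_n (indices 0..n-1, natural order). *)
Definition is_gcm (n : nat) (C : 'M[int]_n) : Prop :=
  (forall i, C i i = 2%R) /\
  (forall i j, i != j -> (C i j <= 0)%R) /\
  (forall i j, (C i j == 0) = (C j i == 0)).

Definition indecomposable (n : nat) (C : 'M[int]_n) : Prop :=
  forall J : {set 'I_n}, J != set0 -> J != setT ->
    exists i j, [/\ i \in J, j \notin J & C i j != 0].

Definition principal_submx (n : nat) (C : 'M[int]_n) (J : {set 'I_n}) :
  'M[int]_#|J| := \matrix_(k, l) C (enum_val k) (enum_val l).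

(* Finite type (Kac, Thm 4.3): all principal minors are positive.  Together
   with indecomposability, these are exactly the Cartan matrices of complex
   simple Lie algebras (with an arbitrary labelling of the nodes). *)
Definition cartan_finite_simple (n : nat) (C : 'M[int]_n) : Prop :=
  [/\ is_gcm C, indecomposable C &
      forall J : {set 'I_n}, (0 < \det (principal_submx C J))%R].

Definition is_partition (s : seq nat) : bool :=
  sorted geq s && all (fun x => 0 < x) s.

Definition psize (s : seq nat) : nat := sumn s.

Definition mult (s : seq nat) (a : nat) : nat := count_mem a s.

Definition Rset (s : seq nat) : seq (nat * nat) :=
  flatten [seq [seq (a, u) | u <- iota 1 (mult s a)] | a <- iota 1 (\max_(x <- s) x)].

Definition lexlt (x y : nat * nat) : bool :=
  (x.1 < y.1) || ((x.1 == y.1) && (x.2 < y.2)).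

Definition Pmu (n : nat) (C : 'M[int]_n) (mu : 'I_n -> seq nat) : int :=
  (2 * (\sum_(i < n) \sum_(x <- Rset (mu i)) \sum_(y <- Rset (mu i) | lexlt x y)
              (minn x.1 y.1)%:R)
   - \sum_(i < n) \sum_(j < n | (i < j)%N) \sum_(x <- Rset (mu i)) \sum_(y <- Rset (mu j))
              (minn ((`|C j i|)%N * x.1) ((`|C i j|)%N * y.1))%:R)%R.

From HB Require Import structures.
From mathcomp Require Import all_boot all_order all_algebra all_fingroup.
From mathcomp Require Import ring lra zify.
Set Implicit Arguments. Unset Strict Implicit. Unset Printing Implicit Defensive.
Import Order.TTheory GRing.Theory Num.Theory.

(* C is a Z-matrix with positive principal minors, so by induction on n through
   the Schur complement there is u > 0 with Cu > 0.  For a list A of lengths put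
   X(A) = sum_{a,b in A} min(a,b); on the rows of R(mu) it equals twice the
   diagonal part of P plus |mu|.  As min(a,b) = sum_k [k < a][k < b], AM-GM
   applied layer by layer gives
     2 sum min(|c_ji| a, |c_ij| b) <= |c_ij| (u_j/u_i) X_i + |c_ji| (u_i/u_j) X_j,
   and summing over i < j bounds twice the off-diagonal part of P by
   sum_i X_i (2 - (Cu)_i / u_i) < 2 sum_i X_i, which rearranges to the claim. *)

Section Determinants.
Local Open Scope ring_scope.

Lemma det_mxsub_inj (R : comNzRingType) m p (A : 'M[R]_p) (h : 'I_m -> 'I_p) :
  injective h -> m = p -> \det (mxsub h h A) = \det A.
Proof.
move=> h_inj e; subst m; set s := perm h_inj.
have -> : mxsub h h A = row_perm s (col_perm s A).
  by apply/matrixP => i j; rewrite !mxE !permE.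
rewrite row_permE col_permE !det_mulmx !det_perm odd_permV.
by rewrite mulrCA -signr_addb addbb mulr1.
Qed.

Definition schur_complement (F : fieldType) n (M : 'M[F]_n.+1) : 'M[F]_n :=
  \matrix_(i, j) (M (lift 0 i) (lift 0 j) - M (lift 0 i) 0 * M 0 (lift 0 j) / M 0 0).

Lemma det_schur_complement (F : fieldType) n (M : 'M[F]_n.+1) :
  M 0 0 != 0 -> \det M = M 0 0 * \det (schur_complement M).
Proof.
move=> M00.
pose E : 'M[F]_n.+1 :=
  1%:M - \matrix_(i, j) (if (j == 0) && (i != 0) then M i 0 / M 0 0 else 0).
have det_E : \det E = 1.
  rewrite det_trig; last first.
    apply/is_trig_mxP => i j lt_ij; rewrite !mxE.
    have -> : (j == 0) = false by apply/negbTE; rewrite -lt0n (leq_ltn_trans _ lt_ij).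
    have /negbTE -> : i != j by rewrite -val_eqE /= ltn_eqF.
    by rewrite /= subr0.
  by rewrite big1 // => i _; rewrite !mxE eqxx; case: (i == 0); rewrite ?andbF ?subr0.
have EM i j : (E *m M) i j = M i j - (if i != 0 then M i 0 / M 0 0 * M 0 j else 0).
  rewrite mulmxBl mul1mx !mxE (bigD1 0) //= big1 ?addr0.
    by rewrite !mxE eqxx /=; case: (i != 0); rewrite ?mul0r.
  by move=> k /negbTE nk; rewrite !mxE nk /= mul0r.
rewrite -[\det M]mul1r -det_E -det_mulmx (expand_det_col _ 0) big_ord_recl.
rewrite big1 ?addr0 => [|i _]; last by rewrite EM /= divfK // subrr mul0r.
rewrite EM /= subr0 /cofactor /= expr0 mul1r; congr (_ * \det _).
apply/matrixP => i j; have := EM (lift 0 i) (lift 0 j).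
by rewrite !mxE => ->; rewrite /= mulrAC.
Qed.

End Determinants.

Section ZMatrix.
Local Open Scope ring_scope.
Variable F : realFieldType.

Definition Zmatrix n (M : 'M[F]_n) := forall i j, i != j -> M i j <= 0.

Definition pos_principal_minors n (M : 'M[F]_n) :=
  forall m (f : 'I_m -> 'I_n), injective f -> 0 < \det (mxsub f f M).

Lemma pos_minors_pivot n (M : 'M[F]_n.+1) : pos_principal_minors M -> 0 < M 0 0.
Proof.
move/(_ 1 (fun=> 0) (fun a b _ => etrans (ord1 a) (esym (ord1 b)))).
by rewrite det_mx11 mxE.
Qed.

Lemma Zmatrix_schur n (M : 'M[F]_n.+1) :
  Zmatrix M -> 0 < M 0 0 -> Zmatrix (schur_complement M).
Proof.
move=> ZM M00 i j ij; rewrite mxE.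
have Mij : M (lift 0 i) (lift 0 j) <= 0.
  by apply: ZM; apply: contra ij => /eqP/lift_inj ->.
have Mi0 : M (lift 0 i) 0 <= 0 by apply: ZM; rewrite eq_sym neq_lift.
have M0j : M 0 (lift 0 j) <= 0 by apply: ZM; rewrite neq_lift.
have : 0 <= M (lift 0 i) 0 * M 0 (lift 0 j) / M 0 0.
  by rewrite divr_ge0 ?mulr_le0 // ltW.
lra.
Qed.

Lemma pos_minors_schur n (M : 'M[F]_n.+1) :
  pos_principal_minors M -> pos_principal_minors (schur_complement M).
Proof.
move=> PM m f f_inj.
pose f' (k : 'I_m.+1) := if unlift 0 k is Some k' then lift 0 (f k') else 0.
have f'_inj : injective f'.
  rewrite /f' => a b.
  by case: unliftP => [a'|] ->; case: unliftP => [b'|] -> // /lift_inj/f_inj ->.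
have -> : mxsub f f (schur_complement M) = schur_complement (mxsub f' f' M).
  by apply/matrixP => i j; rewrite !mxE /f' !liftK unlift_none.
have := PM _ _ f'_inj; rewrite det_schur_complement; last first.
  by rewrite mxE /f' unlift_none gt_eqF // pos_minors_pivot.
by rewrite mxE /f' unlift_none pmulr_rgt0 // pos_minors_pivot.
Qed.

Lemma pos_vector_lift n (M : 'M[F]_n.+1) (v : 'I_n -> F) :
  Zmatrix M -> 0 < M 0 0 -> (forall i, 0 < v i) ->
  (forall i, 0 < \sum_j schur_complement M i j * v j) ->
  exists2 u : 'I_n.+1 -> F, (forall k, 0 < u k) & (forall k, 0 < \sum_l M k l * u l).
Proof.
move=> ZM c_gt0 v_gt0 g_gt0.
set c := M 0 0 in c_gt0 *; pose g i := \sum_j schur_complement M i j * v j.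
have {}g_gt0 i : 0 < g i := g_gt0 i.
set w := \sum_j M 0 (lift 0 j) * v j.
pose a (i : 'I_n) := - M (lift 0 i) 0.
have w_le0 : w <= 0.
  apply: sumr_le0 => j _; apply: mulr_le0_ge0; last exact: ltW.
  by apply: ZM; rewrite neq_lift.
have a_ge0 i : 0 <= a i by rewrite oppr_ge0 ZM // eq_sym neq_lift.
have gE i : g i = \sum_j M (lift 0 i) (lift 0 j) * v j + a i * w / c.
  rewrite /g /w /a mulr_sumr mulr_suml -big_split /=; apply: eq_bigr => j _.
  by rewrite mxE -/c; field; rewrite gt_eqF.
(* e := (1 + sum_i a_i/g_i)^-1 satisfies 0 < e and e a_i < g_i for all i; then
   u := (e - w/c, v) has row 0 equal to c e and row i.+1 equal to g_i - e a_i. *)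
pose X := \sum_i a i / g i.
have aX i : a i <= g i * X.
  rewrite mulrC -ler_pdivrMr // /X (bigD1 i) //= lerDl.
  by apply: sumr_ge0 => j _; rewrite divr_ge0 // ltW.
have X_ge0 : 0 <= X by apply: sumr_ge0 => i _; rewrite divr_ge0 // ltW.
pose e := (1 + X)^-1.
have e_gt0 : 0 < e by rewrite invr_gt0; lra.
have ea_lt_g i : e * a i < g i.
  rewrite ltr_pdivrMl; last lra.
  by have := aX i; have := g_gt0 i; nra.
pose t := e - w / c.
have t_gt0 : 0 < t.
  have : 0 <= - w / c by rewrite divr_ge0 ?oppr_ge0 // ltW.
  by rewrite /t mulNr; lra.
exists (fun k => if unlift 0 k is Some k' then v k' else t).
  by move=> k; case: unliftP.
move=> k; rewrite big_ord_recl unlift_none; under eq_bigr do rewrite liftK.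
case: (unliftP 0 k) => [i|] ->.
  have := ea_lt_g i; rewrite gE /t -[M _ 0]opprK -/(a i).
  set Z := \sum_j _ => lt_eag.
  have -> : - a i * (e - w / c) + Z = Z + a i * w / c - e * a i by field; rewrite gt_eqF.
  lra.
have -> : c * (e - w / c) + w = c * e by field; rewrite gt_eqF.
exact: mulr_gt0.
Qed.

Lemma Zmatrix_pos_minors_pos_vector n (M : 'M[F]_n) :
  Zmatrix M -> pos_principal_minors M ->
  exists2 u : 'I_n -> F, (forall i, 0 < u i) & (forall i, 0 < \sum_j M i j * u j).
Proof.
elim: n M => [|n IH] M ZM PM; first by exists (fun=> 1) => -[].
have M00 := pos_minors_pivot PM.
have [v v_gt0 Sv_gt0] := IH _ (Zmatrix_schur ZM M00) (pos_minors_schur PM).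
exact: pos_vector_lift.
Qed.

End ZMatrix.

Section CartanMatrix.
Local Open Scope ring_scope.

Lemma det_mxsub_principal n (C : 'M[int]_n) m (f : 'I_m -> 'I_n) : injective f ->
  \det (mxsub f f C) = \det (principal_submx C (f @: [set: 'I_m])).
Proof.
move=> f_inj; set J := f @: [set: 'I_m].
have fJ k : f k \in J by apply: imset_f; rewrite inE.
pose h k : 'I_#|J| := enum_rank_in (fJ k) (f k).
have hE k : enum_val (h k) = f k by rewrite enum_rankK_in.
have h_inj : injective h by move=> a b e; apply: f_inj; rewrite -!hE e.
have cardJ : m = #|J| by rewrite card_imset // cardsT card_ord.
rewrite -(det_mxsub_inj (principal_submx C J) h_inj cardJ).
by congr (\det _); apply/matrixP => k l; rewrite !mxE !hE.
Qed.

Lemma cartan_pos_vector (F : realFieldType) n (C : 'M[int]_n) :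
  (forall i j, i != j -> C i j <= 0) ->
  (forall J : {set 'I_n}, 0 < \det (principal_submx C J)) ->
  exists2 u : 'I_n -> F, (forall i, 0 < u i) & (forall i, 0 < \sum_j (C i j)%:~R * u j).
Proof.
move=> C_le0 C_minors; pose M : 'M[F]_n := map_mx intr C.
have M_Z : Zmatrix M by move=> i j ij; rewrite mxE lerz0 C_le0.
have M_minors : pos_principal_minors M.
  by move=> m f f_inj; rewrite /M -map_mxsub det_map_mx ltr0z det_mxsub_principal.
have [u u_gt0 Mu_gt0] := Zmatrix_pos_minors_pos_vector M_Z M_minors.
by exists u => // i; rewrite (eq_bigr (fun j => M i j * u j)) // => j _; rewrite mxE.
Qed.

End CartanMatrix.

Lemma count_nat_sum (T : Type) (P : pred T) r : count P r = \sum_(x <- r) P x.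
Proof. by elim: r => [|x r IH]; rewrite ?big_nil ?big_cons //= IH. Qed.

Lemma sum_mulnb (I : Type) (r : seq I) (P : pred I) (F : I -> nat) :
  \sum_(i <- r) F i * P i = \sum_(i <- r | P i) F i.
Proof.
by rewrite [RHS]big_mkcond; apply: eq_bigr => i _; case: (P i); rewrite ?muln1 ?muln0.
Qed.

Lemma sum_pred1_uniq (T : eqType) (r : seq T) x (F : T -> nat) :
  uniq r -> x \in r -> \sum_(y <- r | y == x) F y = F x.
Proof.
move=> r_uniq xr; rewrite (eq_bigr (fun=> F x)) => [|y /eqP -> //].
by rewrite big_const_seq iter_addn_0 (count_uniq_mem x r_uniq) xr muln1.
Qed.

Lemma sum_square_split (T : eqType) (r : seq T) (lt : rel T) (f : T -> T -> nat) :
  uniq r -> (forall x y, lt x y + (x == y) + lt y x = 1) ->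
  (forall x y, f x y = f y x) ->
  \sum_(x <- r) \sum_(y <- r) f x y
  = 2 * \sum_(x <- r) \sum_(y <- r | lt x y) f x y + \sum_(x <- r) f x x.
Proof.
move=> r_uniq lt_tri f_sym.
have upper : \sum_(x <- r) \sum_(y <- r) f x y * lt x y
             = \sum_(x <- r) \sum_(y <- r | lt x y) f x y.
  by apply: eq_bigr => x _; rewrite sum_mulnb.
have lower : \sum_(x <- r) \sum_(y <- r) f x y * lt y x
             = \sum_(x <- r) \sum_(y <- r | lt x y) f x y.
  by rewrite exchange_big -upper; apply: eq_bigr => x _; apply: eq_bigr => y _; rewrite f_sym.
have diag : \sum_(x <- r) \sum_(y <- r) f x y * (x == y) = \sum_(x <- r) f x x.
  apply: eq_big_seq => x xr; rewrite sum_mulnb -(sum_pred1_uniq (f x) r_uniq xr).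
  by apply: eq_bigl => y; rewrite eq_sym.
rewrite mul2n -addnn -{1}upper -{1}lower -diag -!big_split /=.
apply: eq_bigr => x _; rewrite -!big_split /=; apply: eq_bigr => y _.
by rewrite -!mulnDr addnAC lt_tri muln1.
Qed.

Lemma sum_ord_ltn N m : \sum_(k < N) (k < m) = minn m N.
Proof.
elim: N => [|N IH]; first by rewrite big_ord0 minn0.
by rewrite big_ord_recr /= IH; case: (ltnP N m); lia.
Qed.

Lemma sum_minn_count (A B : seq nat) N :
  all (fun a => a <= N) A -> all (fun b => b <= N) B ->
  \sum_(a <- A) \sum_(b <- B) minn a b
  = \sum_(k < N) count (fun a => k < a) A * count (fun b => k < b) B.
Proof.
move=> /allP A_le /allP B_le.
rewrite [RHS](eq_bigr (fun k : 'I_N =>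
    \sum_(a <- A) \sum_(b <- B) (k < a) * (k < b))); last first.
  move=> k _; rewrite !count_nat_sum big_distrl.
  by apply: eq_bigr => a _; rewrite big_distrr.
rewrite [RHS]exchange_big; apply: eq_big_seq => a aA; rewrite [RHS]exchange_big.
apply: eq_big_seq => b bB; under eq_bigr do rewrite mulnb -leq_min.
by rewrite sum_ord_ltn; apply/esym/minn_idPl; rewrite geq_min A_le.
Qed.

Definition minsum (A : seq nat) : nat := \sum_(a <- A) \sum_(b <- A) minn a b.

Lemma minsum_map_mul q A : minsum (map (muln q) A) = q * minsum A.
Proof.
rewrite /minsum big_map big_distrr; apply: eq_bigr => a _.
by rewrite big_map big_distrr; apply: eq_bigr => b _; rewrite -[RHS]/(q * minn a b) minnMr.
Qed.

Section MinKernel.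
Local Open Scope ring_scope.
Variable F : realFieldType.

(* minn a b = \sum_k (k < a) * (k < b): apply AM-GM to each layer k. *)
Lemma sum_minn_cross_le (A B : seq nat) (s : F) : 0 < s ->
  2 * (\sum_(a <- A) \sum_(b <- B) minn a b)%:R
  <= s * (minsum A)%:R + (minsum B)%:R / s.
Proof.
move=> s_gt0; set N := \max_(x <- A ++ B) x.
have le_N (X : seq nat) : {subset X <= A ++ B} -> all (fun x => x <= N)%N X.
  by move=> XAB; apply/allP => x /XAB xAB; apply: leq_bigmax_seq.
have A_le : all (fun x => x <= N)%N A by apply: le_N => x xA; rewrite mem_cat xA.
have B_le : all (fun x => x <= N)%N B by apply: le_N => x xB; rewrite mem_cat xB orbT.
rewrite /minsum (sum_minn_count A_le B_le) (sum_minn_count A_le A_le).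
rewrite (sum_minn_count B_le B_le) !natr_sum.
rewrite [2 * _]mulr_sumr [s * _]mulr_sumr mulr_suml -big_split; apply: ler_sum => k _.
rewrite /= !natrM; set x := (count _ A)%:R; set y := (count _ B)%:R.
have : 0 <= (s * x - y) ^+ 2 / s by rewrite divr_ge0 ?sqr_ge0 ?ltW.
have -> : (s * x - y) ^+ 2 / s = s * (x * x) + y * y / s - 2 * (x * y).
  by field; rewrite gt_eqF.
lra.
Qed.

Lemma sum_minn_scaled_cross_le (A B : seq nat) p q (s : F) : 0 < s ->
  2 * (\sum_(a <- A) \sum_(b <- B) minn (q * a) (p * b))%:R
  <= p%:R * s * (minsum A)%:R + q%:R / s * (minsum B)%:R.
Proof.
move=> s_gt0; have s_ge0 := ltW s_gt0.
have [-> | p_gt0] := posnP p.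
  rewrite big1 ?mulr0 => [|a _]; last by rewrite big1 // => b _; rewrite mul0n minn0.
  by apply: addr_ge0; rewrite mulr_ge0 ?mulr_ge0 ?invr_ge0 ?ler0n.
have [-> | q_gt0] := posnP q.
  rewrite big1 ?mulr0 => [|a _]; last by rewrite big1 // => b _; rewrite mul0n min0n.
  by apply: addr_ge0; rewrite mulr_ge0 ?mulr_ge0 ?invr_ge0 ?ler0n.
have s'_gt0 : 0 < p%:R * s / q%:R :> F by rewrite !mulr_gt0 ?invr_gt0 ?ltr0n.
have := sum_minn_cross_le (map (muln q) A) (map (muln p) B) s'_gt0.
rewrite !minsum_map_mul big_map; under eq_bigr do rewrite big_map.
rewrite !natrM => /le_trans; apply; rewrite le_eqVlt; apply/orP; left; apply/eqP.
by field; rewrite !gt_eqF ?ltr0n.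
Qed.

End MinKernel.

Lemma lexlt_trichotomy (x y : nat * nat) : lexlt x y + (x == y) + lexlt y x = 1.
Proof.
case: x y => [a b] [c d]; rewrite /lexlt /= xpair_eqE.
by case: (ltngtP a c) => //= _; case: ltngtP.
Qed.

Lemma Rset_uniq s : uniq (Rset s).
Proof.
apply: allpairs_uniq_dep => [||[a u] [b v] _ _ /= [-> ->]] //; first exact: iota_uniq.
by move=> a _; exact: iota_uniq.
Qed.

Lemma sum_count_mem_mul (r s : seq nat) : uniq r -> {subset s <= r} ->
  \sum_(a <- r) count_mem a s * a = sumn s.
Proof.
move=> r_uniq s_r; rewrite sumnE.
transitivity (\sum_(x <- s) \sum_(a <- r) a * (a == x)); last first.
  by apply: eq_big_seq => x xs; rewrite sum_mulnb; apply: sum_pred1_uniq; last exact: s_r.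
rewrite exchange_big; apply: eq_bigr => a _.
by rewrite count_nat_sum big_distrl; apply: eq_bigr => x _; rewrite mulnC eq_sym.
Qed.

Lemma sum_Rset_fst s : all (fun x => 0 < x) s -> \sum_(x <- Rset s) x.1 = psize s.
Proof.
move=> /allP s_gt0; rewrite big_flatten big_map /psize.
rewrite -(sum_count_mem_mul (iota_uniq 1 (\max_(x <- s) x))) => [|x xs]; last first.
  by rewrite mem_iota s_gt0 //= add1n ltnS; apply: leq_bigmax_seq.
apply: eq_bigr => a _; rewrite big_map big_const_seq count_predT size_iota.
by rewrite iter_addn_0 mulnC.
Qed.

Lemma minsum_Rset s : all (fun x => 0 < x) s ->
  minsum (map fst (Rset s))
  = 2 * \sum_(x <- Rset s) \sum_(y <- Rset s | lexlt x y) minn x.1 y.1 + psize s.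
Proof.
move=> s_gt0; rewrite /minsum big_map; under eq_bigr do rewrite big_map.
rewrite (sum_square_split (Rset_uniq s) lexlt_trichotomy) => [|x y]; last exact: minnC.
by under [X in _ + X]eq_bigr do rewrite minnn; rewrite sum_Rset_fst.
Qed.

Lemma psize_gt0 s : all (fun x => 0 < x) s -> s != [::] -> 0 < psize s.
Proof. by case: s => //= x s /andP[x_gt0 _] _; rewrite /psize /= addn_gt0 x_gt0. Qed.

Section CartanForm.
Local Open Scope ring_scope.

Lemma sum_ltn_pairs (V : nmodType) n (G : 'I_n -> 'I_n -> V) :
  \sum_(i < n) \sum_(j < n | (i < j)%N) G i j
  + \sum_(i < n) \sum_(j < n | (i < j)%N) G j i
  = \sum_(i < n) \sum_(j < n | j != i) G i j.
Proof.
rewrite [X in _ + X](exchange_big_dep xpredT) //= -big_split /=.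
apply: eq_bigr => i _.
rewrite [RHS](bigID (fun j : 'I_n => (i < j)%N)) /=.
by congr (_ + _); apply: eq_bigl => j; rewrite -val_eqE /=; case: ltngtP.
Qed.

Lemma sum_abs_offdiag (F : numDomainType) n (C : 'M[int]_n) (u : 'I_n -> F) i :
  C i i = 2 -> (forall j, j != i -> C i j <= 0) ->
  \sum_(j | j != i) (`|C i j|%N)%:R * u j = 2 * u i - \sum_j (C i j)%:~R * u j.
Proof.
move=> Cii C_le0; rewrite [in RHS](bigD1 i) //= Cii mulrz_nat.
rewrite opprD addrA subrr sub0r -sumrN; apply: eq_bigr => j ji.
have Cij : C i j = - (`|C i j|%N)%:Z by rewrite lez0_abs ?opprK // C_le0.
by rewrite [in RHS]Cij mulrNz mulNr opprK -pmulrn.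
Qed.

Lemma sum_cross_minsum_lt (F : realFieldType) n (C : 'M[int]_n)
    (L : 'I_n -> seq nat) (u : 'I_n -> F) :
  (forall i, C i i = 2) -> (forall i j, i != j -> C i j <= 0) ->
  (forall i, 0 < u i) -> (forall i, 0 < \sum_j (C i j)%:~R * u j) ->
  (exists i, 0 < minsum (L i))%N ->
  (\sum_(i < n) \sum_(j < n | i < j) \sum_(a <- L i) \sum_(b <- L j)
      minn (`|C j i| * a) (`|C i j| * b) < \sum_(i < n) minsum (L i))%N.
Proof.
move=> Cii C_le0 u_gt0 Cu_gt0 [i0 L_i0].
rewrite -(ltr_nat F) !natr_sum; set T := \sum_(i < n) _.
pose X i : F := (minsum (L i))%:R.
pose a i j : F := (`|C i j|%N)%:R * (u j / u i) * X i.
have cross_le : 2 * T <= \sum_i \sum_(j | j != i) a i j.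
  rewrite -sum_ltn_pairs mulr_sumr -big_split /=; apply: ler_sum => i _.
  rewrite natr_sum mulr_sumr -big_split /=; apply: ler_sum => j _.
  have uji_gt0 : 0 < u j / u i by rewrite divr_gt0.
  apply: le_trans (sum_minn_scaled_cross_le _ _ _ _ uji_gt0) _.
  by rewrite /a invf_div.
have rowE i : \sum_(j | j != i) a i j = 2 * X i - X i / u i * \sum_j (C i j)%:~R * u j.
  have ui_neq0 : u i != 0 by rewrite gt_eqF.
  have -> : \sum_(j | j != i) a i j = X i / u i * \sum_(j | j != i) (`|C i j|%N)%:R * u j.
    by rewrite mulr_sumr; apply: eq_bigr => j _; rewrite /a; field.
  rewrite sum_abs_offdiag // => [|j ji]; first by field.
  by rewrite C_le0 // eq_sym.
have weighted_gt0 : 0 < \sum_i X i / u i * \sum_j (C i j)%:~R * u j.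
  rewrite (bigD1 i0) //= ltr_pwDl ?mulr_gt0 ?invr_gt0 ?ltr0n //.
  by apply: sumr_ge0 => i _; rewrite mulr_ge0 ?divr_ge0 ?ler0n // ltW.
move: cross_le; rewrite (eq_bigr _ (fun i _ => rowE i)) sumrB -mulr_sumr.
rewrite /X in weighted_gt0 *; lra.
Qed.

End CartanForm.

Theorem lemmaA4 (n : nat) (C : 'M[int]_n) (mu : 'I_n -> seq nat) :
  cartan_finite_simple C ->
  (forall i, is_partition (mu i)) ->
  (exists i, mu i != [::]) ->
  (- (\sum_(i < n) (psize (mu i))%:R) < Pmu C mu)%R.
Proof.
case=> [[Cii [C_le0 _]] _ C_minors] mu_part [i0 mu_i0].
have mu_gt0 i : all (fun x => 0 < x) (mu i) by case/andP: (mu_part i).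
have [u u_gt0 Cu_gt0] := cartan_pos_vector rat C_le0 C_minors.
pose L i := map fst (Rset (mu i)).
have L_gt0 : exists i, 0 < minsum (L i).
  by exists i0; rewrite minsum_Rset // ltn_addl // psize_gt0.
have := sum_cross_minsum_lt Cii C_le0 u_gt0 Cu_gt0 L_gt0.
rewrite (eq_bigr _ (fun i _ => minsum_Rset (mu_gt0 i))) big_split /= -big_distrr.
under eq_bigr do under eq_bigr do rewrite big_map.
under eq_bigr do under eq_bigr do under eq_bigr do rewrite big_map.
set T := \sum_(i < n) _; set D := \sum_(i < n) _; set P := \sum_(i < n) _ => T_lt.
have -> : Pmu C mu = (2 * D%:R - T%:R)%R.
  rewrite /Pmu /D /T !natr_sum; congr (2 * _ - _)%R; apply: eq_bigr => i _.
    by rewrite natr_sum; apply: eq_bigr => x _; rewrite natr_sum.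
  rewrite natr_sum; apply: eq_bigr => j _; rewrite natr_sum; apply: eq_bigr => x _.
  by rewrite natr_sum.
have {}T_lt : (T < 2 * D + P)%N := T_lt.
rewrite -natr_sum -/P !natz; lia.
Qed.
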